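(* Let $E$ be a countable Borel equivalence relation on a standard Borel space $X$ induced by a Borel action of a countable group $\Gamma$. If $\mathcal C_0,\mathcal C_1,\dots$ are countably many clubs of good Polish topologies on $X$, then $\bigcap_i\mathcal C_i$ is a club.
   Context: A Polish topology on $X$ is good if it generates the Borel structure of $X$ and makes the $\Gamma$-action continuous. A class $\mathcal C$ of good Polish topologies is a club if (cofinal) every good Polish topology is contained in some member of $\mathcal C$, and (closed) whenever $\tau_0\subseteq\tau_1\subseteq\cdots$ all lie in $\mathcal C$, the topology generated by $\bigcup_i\tau_i$ lies in $\mathcal C$. *)

From Stdlib Require Import Reals.
Open Scope R_scope.

Definition subfam {X : Type} (F H : (X -> Prop) -> Prop) : Prop :=
  forall A, F A -> H A.

Definition is_topology {X : Type} (tau : (X -> Prop) -> Prop) : Prop :=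
  tau (fun _ => True) /\
  (forall F : (X -> Prop) -> Prop, subfam F tau ->
     tau (fun x => exists A, F A /\ A x)) /\
  (forall A B, tau A -> tau B -> tau (fun x => A x /\ B x)).

Definition generated_topology {X : Type} (F : (X -> Prop) -> Prop) : (X -> Prop) -> Prop :=
  fun A => forall tau, is_topology tau -> subfam F tau -> tau A.

Definition is_metric {X : Type} (d : X -> X -> R) : Prop :=
  (forall x y, 0 <= d x y) /\
  (forall x y, d x y = 0 <-> x = y) /\
  (forall x y, d x y = d y x) /\
  (forall x y z, d x z <= d x y + d y z).

Definition metric_open {X : Type} (d : X -> X -> R) (A : X -> Prop) : Prop :=
  forall x, A x -> exists eps, 0 < eps /\ forall y, d x y < eps -> A y.

Definition metric_complete {X : Type} (d : X -> X -> R) : Prop :=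
  forall u : nat -> X,
    (forall eps, 0 < eps -> exists N, forall m n, (N <= m)%nat -> (N <= n)%nat -> d (u m) (u n) < eps) ->
    exists x, forall eps, 0 < eps -> exists N, forall n, (N <= n)%nat -> d (u n) x < eps.

Definition countable_set {X : Type} (D : X -> Prop) : Prop :=
  exists f : X -> nat, forall x y, D x -> D y -> f x = f y -> x = y.

Definition separable {X : Type} (tau : (X -> Prop) -> Prop) : Prop :=
  exists D : X -> Prop, countable_set D /\
    forall U, tau U -> (exists x, U x) -> exists x, D x /\ U x.

Definition polish {X : Type} (tau : (X -> Prop) -> Prop) : Prop :=
  is_topology tau /\ separable tau /\
  exists d : X -> X -> R, is_metric d /\ metric_complete d /\
    (forall A, tau A <-> metric_open d A).

Definition is_sigma_algebra {X : Type} (S : (X -> Prop) -> Prop) : Prop :=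
  S (fun _ => True) /\
  (forall A, S A -> S (fun x => ~ A x)) /\
  (forall A : nat -> X -> Prop, (forall n, S (A n)) -> S (fun x => exists n, A n x)).

Definition sigma_generated {X : Type} (F : (X -> Prop) -> Prop) : (X -> Prop) -> Prop :=
  fun A => forall S, is_sigma_algebra S -> subfam F S -> S A.

Definition standard_borel {X : Type} (B : (X -> Prop) -> Prop) : Prop :=
  is_sigma_algebra B /\
  exists tau, polish tau /\ forall A, B A <-> sigma_generated tau A.

Definition is_group {G : Type} (mul : G -> G -> G) (one : G) (inv : G -> G) : Prop :=
  (forall a b c, mul a (mul b c) = mul (mul a b) c) /\
  (forall a, mul one a = a /\ mul a one = a) /\
  (forall a, mul (inv a) a = one /\ mul a (inv a) = one).

Definition countable_type (G : Type) : Prop :=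
  exists f : G -> nat, forall a b, f a = f b -> a = b.

Definition is_action {G X : Type} (mul : G -> G -> G) (one : G) (act : G -> X -> X) : Prop :=
  (forall x, act one x = x) /\ (forall g h x, act (mul g h) x = act g (act h x)).

Definition borel_action {G X : Type} (B : (X -> Prop) -> Prop) (act : G -> X -> X) : Prop :=
  forall g A, B A -> B (fun x => A (act g x)).

Definition continuous_wrt {X : Type} (tau : (X -> Prop) -> Prop) (f : X -> X) : Prop :=
  forall U, tau U -> tau (fun x => U (f x)).

Definition good {G X : Type} (B : (X -> Prop) -> Prop) (act : G -> X -> X)
  (tau : (X -> Prop) -> Prop) : Prop :=
  polish tau /\ (forall A, sigma_generated tau A <-> B A) /\
  (forall g, continuous_wrt tau (act g)).

Definition club {G X : Type} (B : (X -> Prop) -> Prop) (act : G -> X -> X)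
  (C : ((X -> Prop) -> Prop) -> Prop) : Prop :=
  (forall tau, C tau -> good B act tau) /\
  (forall tau, good B act tau -> exists tau', C tau' /\ subfam tau tau') /\
  (forall t : nat -> (X -> Prop) -> Prop,
     (forall i, C (t i)) -> (forall i, subfam (t i) (t (S i))) ->
     C (generated_topology (fun A => exists i, t i A))).

(* Enumerate the pairs (i, m) so that every index i recurs infinitely often,
   and build an increasing chain from a given good topology, extending the
   current topology at step n into the club C_i for the i of the n-th pair.
   The steps devoted to a fixed i form a cofinal subchain lying in C_i, so
   the topology generated by the whole chain lies in C_i by closedness. *)
From Stdlib Require Import Arith Lia Cantor ClassicalEpsilon
  FunctionalExtensionality PropExtensionality.
Local Open Scope nat_scope.

Lemma subfam_chain {X : Type} (t : nat -> (X -> Prop) -> Prop) :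
  (forall n, subfam (t n) (t (S n))) ->
  forall m n, m <= n -> subfam (t m) (t n).
Proof.
  intros ht m n Hmn; induction Hmn as [|n _ IH]; intros A HA.
  - exact HA.
  - apply ht, IH, HA.
Qed.

Lemma union_cofinal_subchain {X : Type} (t : nat -> (X -> Prop) -> Prop)
  (f : nat -> nat) :
  (forall n, subfam (t n) (t (S n))) -> (forall n, n <= f n) ->
  (fun A => exists m, t (f m) A) = (fun A => exists n, t n A).
Proof.
  intros ht hf.
  apply functional_extensionality; intros A.
  apply propositional_extensionality; split.
  - intros [m Hm]; exists (f m); exact Hm.
  - intros [n Hn]; exists n; exact (subfam_chain t ht n (f n) (hf n) A Hn).
Qed.

Lemma to_nat_le_succ_snd i m :
  Cantor.to_nat (i, m) <= Cantor.to_nat (i, S m).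
Proof.
  pose proof (to_nat_spec i m); pose proof (to_nat_spec i (S m)); nia.
Qed.

Section Clubs.

Variables (X G : Type) (B : (X -> Prop) -> Prop) (act : G -> X -> X).

Lemma club_closed_cofinal_subchain (C : ((X -> Prop) -> Prop) -> Prop)
  (t : nat -> (X -> Prop) -> Prop) (f : nat -> nat) :
  club B act C ->
  (forall n, subfam (t n) (t (S n))) ->
  (forall m, f m <= f (S m)) -> (forall n, n <= f n) ->
  (forall m, C (t (f m))) ->
  C (generated_topology (fun A => exists n, t n A)).
Proof.
  intros [_ [_ hclosed]] ht hfmono hf hC.
  rewrite <- (union_cofinal_subchain t f ht hf).
  apply hclosed; [exact hC|].
  intros m; apply subfam_chain; auto.
Qed.

Lemma clubs_extension (C : nat -> ((X -> Prop) -> Prop) -> Prop) :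
  (forall i, club B act (C i)) ->
  exists F : nat -> ((X -> Prop) -> Prop) -> (X -> Prop) -> Prop,
    forall i tau, good B act tau -> C i (F i tau) /\ subfam tau (F i tau).
Proof.
  intros hC.
  exists (fun i tau => epsilon (inhabits tau)
                         (fun tau' => C i tau' /\ subfam tau tau')).
  intros i tau Htau; apply epsilon_spec.
  exact (proj1 (proj2 (hC i)) tau Htau).
Qed.

Fixpoint interleave (F : nat -> ((X -> Prop) -> Prop) -> (X -> Prop) -> Prop)
  (tau : (X -> Prop) -> Prop) (n : nat) : (X -> Prop) -> Prop :=
  match n with
  | 0 => tau
  | S n => F (fst (Cantor.of_nat n)) (interleave F tau n)
  end.

Variables (C : nat -> ((X -> Prop) -> Prop) -> Prop)
  (F : nat -> ((X -> Prop) -> Prop) -> (X -> Prop) -> Prop).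
Hypothesis hC : forall i, club B act (C i).
Hypothesis hF : forall i tau, good B act tau -> C i (F i tau) /\ subfam tau (F i tau).

Lemma interleave_good tau n :
  good B act tau -> good B act (interleave F tau n).
Proof.
  intros Htau; induction n as [|n IH]; [exact Htau|].
  apply (proj1 (hC (fst (Cantor.of_nat n)))), hF, IH.
Qed.

Lemma interleave_incr tau :
  good B act tau -> forall n, subfam (interleave F tau n) (interleave F tau (S n)).
Proof. intros Htau n; apply hF, interleave_good, Htau. Qed.

Lemma interleave_in_club tau i m :
  good B act tau -> C i (interleave F tau (S (Cantor.to_nat (i, m)))).
Proof.
  intros Htau; cbn [interleave]; rewrite cancel_of_to.
  apply hF, interleave_good, Htau.
Qed.

Lemma interleave_union_in_clubs tau i :
  good B act tau ->
  C i (generated_topology (fun A => exists n, interleave F tau n A)).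
Proof.
  intros Htau.
  apply (club_closed_cofinal_subchain (C i) _ (fun m => S (Cantor.to_nat (i, m)))).
  - exact (hC i).
  - exact (interleave_incr tau Htau).
  - intros m; apply le_n_S, to_nat_le_succ_snd.
  - intros n; pose proof (to_nat_non_decreasing i n); lia.
  - intros m; apply interleave_in_club, Htau.
Qed.

End Clubs.

Arguments interleave {X} F tau n.

Lemma generated_topology_incl {X : Type} (F : (X -> Prop) -> Prop) :
  subfam F (generated_topology F).
Proof. intros A HA tau _ Hsub; exact (Hsub A HA). Qed.

Theorem lemma3p4
  (X : Type) (B : (X -> Prop) -> Prop) (hX : standard_borel B)
  (G : Type) (mul : G -> G -> G) (one : G) (inv : G -> G)
  (hG : is_group mul one inv) (hGc : countable_type G)
  (act : G -> X -> X) (hact : is_action mul one act) (hbor : borel_action B act)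
  (E : X -> X -> Prop) (hE : forall x y, E x y <-> exists g, act g x = y)
  (C : nat -> ((X -> Prop) -> Prop) -> Prop)
  (hC : forall i, club B act (C i)) :
  club B act (fun tau => forall i, C i tau).
Proof.
  split; [|split].
  - intros tau Htau; exact (proj1 (hC 0) tau (Htau 0)).
  - intros tau Htau.
    destruct (clubs_extension _ _ B act C hC) as [F hF].
    exists (generated_topology (fun A => exists n, interleave F tau n A)); split.
    + intros i; exact (interleave_union_in_clubs _ _ B act C F hC hF tau i Htau).
    + intros A HA; apply generated_topology_incl; exists 0; exact HA.
  - intros t Ht Hincr i.
    apply (proj2 (proj2 (hC i))); [intros j; apply Ht | exact Hincr].
Qed.
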